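(* Let $p$ be an odd prime and $r\geq 2$ an integer with $p\nmid r$. Let $S$ be the smallest set of positive integers such that (a) $r\in S$; (b) $n\in S$ whenever $n^{p-1}\in S$; (c) $(n+p)^{p-1}\in S$ whenever $n\in S$. Then $S=\{n\geq 2: n\not\equiv 0\pmod p\}$.
   Context: ''Smallest'' means contained in every set of positive integers satisfying (a), (b), (c). *)

From mathcomp Require Import all_boot.
Set Implicit Arguments. Unset Strict Implicit. Unset Printing Implicit Defensive.

Definition admissible (p r : nat) (T : nat -> Prop) : Prop :=
  (forall n, T n -> 0 < n) /\
  T r /\
  (forall n, T (n ^ p.-1) -> T n) /\
  (forall n, T n -> T ((n + p) ^ p.-1)).

Definition smallestS (p r : nat) (n : nat) : Prop :=
  forall T, admissible p r T -> T n.

From mathcomp Require Import all_boot.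
From mathcomp Require Import cyclic.

Set Implicit Arguments.
Unset Strict Implicit.
Unset Printing Implicit Defensive.

(* Applying (c) and then (b) sends n to n + p, so an admissible set containing
   some a = 1 (mod p) contains every m >= a with m = 1 (mod p); by Fermat,
   a := (r + p)^(p-1) is such an element.  For n >= 2 prime to p the number
   n^((p-1)^a) is = 1 (mod p) and exceeds a, hence lies in the set, and a
   applications of (b) bring it back down to n.  Conversely the set of all
   n >= 2 prime to p is itself admissible. *)

Lemma fermat_little_pred p m : prime p -> ~~ (p %| m) -> m ^ p.-1 = 1 %[mod p].
Proof.
move=> p_pr p_ndvd_m; rewrite -(totient_prime p_pr) Euler_exp_totient //.
by rewrite coprime_sym prime_coprime.
Qed.

Lemma fermat_little_predM p m k :
  prime p -> ~~ (p %| m) -> m ^ (p.-1 * k) = 1 %[mod p].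
Proof.
by move=> p_pr p_ndvd_m; rewrite expnM -modnXm fermat_little_pred // modnXm exp1n.
Qed.

Lemma ltn_expl_tower a b m : 1 < b -> 1 < m -> a < m ^ (b ^ a).
Proof. by move=> b_gt1 m_gt1; exact: ltn_trans (ltn_expl a b_gt1) (ltn_expl _ m_gt1). Qed.

Lemma admissible_ge2_ndvd p r :
  prime p -> 2 <= r -> ~~ (p %| r) ->
  admissible p r (fun n => 2 <= n /\ ~~ (p %| n)).
Proof.
move=> p_pr r_ge2 p_ndvd_r.
have pm1_gt0 : 0 < p.-1 by rewrite -subn1 subn_gt0 prime_gt1.
split; first by move=> n [n_ge2 _]; exact: ltnW.
split=> //; split=> n [n_ge2 p_ndvd_n].
- split; last by apply: contra p_ndvd_n; exact: dvdn_exp.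
  by case: n n_ge2 {p_ndvd_n} => [|[|n]] //; rewrite ?exp0n ?exp1n.
- split; last by rewrite Euclid_dvdX // dvdn_addl // (negbTE p_ndvd_n).
  apply: leq_trans n_ge2 (leq_trans (leq_addr p n) _).
  rewrite -{1}(expn1 (n + p)) leq_pexp2l //.
  by rewrite addn_gt0 (prime_gt0 p_pr) orbT.
Qed.

Section AdmissibleClosure.

Variables (p r : nat) (T : nat -> Prop).
Hypothesis admT : admissible p r T.

Lemma admissible_addp n : T n -> T (n + p).
Proof. by case: admT => _ [_ [rootT powT]] /powT /rootT. Qed.

Lemma admissible_iter_root m j : T (m ^ (p.-1 ^ j)) -> T m.
Proof.
case: admT => _ [_ [rootT _]].
by elim: j => [|j IHj]; rewrite ?expn1 // expnSr expnM => /rootT /IHj.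
Qed.

Lemma admissible_congr a m : T a -> a <= m -> m = a %[mod p] -> T m.
Proof.
move=> Ta le_am /eqP; rewrite eqn_mod_dvd // => /dvdnP [k def_k].
rewrite -(subnKC le_am) {}def_k.
elim: k => [|k IHk]; first by rewrite addn0.
by rewrite mulSnr addnA; exact: admissible_addp.
Qed.

Hypotheses (p_pr : prime p) (p_ndvd_r : ~~ (p %| r)).

Lemma admissible_one_mod : exists2 a, T a & a = 1 %[mod p].
Proof.
exists ((r + p) ^ p.-1); first by case: admT => _ [Tr [_ powT]]; exact: powT.
by rewrite fermat_little_pred // dvdn_addl.
Qed.

Lemma admissible_contains_ge2_ndvd n : 2 < p -> 2 <= n -> ~~ (p %| n) -> T n.
Proof.
move=> p_gt2 n_ge2 p_ndvd_n; have [a Ta a_mod] := admissible_one_mod.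
have a_gt0 : 0 < a by case: admT => posT _; exact: posT.
have pm1_gt1 : 1 < p.-1 by rewrite -subn1 ltn_subRL.
apply: (@admissible_iter_root _ a); apply: (admissible_congr Ta).
- exact: ltnW (ltn_expl_tower a pm1_gt1 n_ge2).
- by rewrite a_mod -(prednK a_gt0) expnS fermat_little_predM.
Qed.

End AdmissibleClosure.

Theorem lemma18 (p r : nat) :
  prime p -> odd p -> 2 <= r -> ~~ (p %| r) ->
  forall n : nat, smallestS p r n <-> (2 <= n /\ n %% p != 0).
Proof.
move=> p_pr p_odd r_ge2 p_ndvd_r n; split.
- by move=> Sn; exact: Sn (admissible_ge2_ndvd p_pr r_ge2 p_ndvd_r).
- move=> [n_ge2 p_ndvd_n] T admT.
  have p_gt2 := odd_prime_gt2 p_odd p_pr.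
  exact (admissible_contains_ge2_ndvd admT p_pr p_ndvd_r p_gt2 n_ge2 p_ndvd_n).
Qed.
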